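(* Let $W$ be a continuous real random variable with $\mathbb{E}[W]=0$, $\mathrm{Var}[W]=1$, cdf $F_W$ with a density $f_W$ defined (positive) on all of $\mathbb{R}$, inverse cdf $F_W^{-1}$ with $F_W^{-1}(0)=-\infty$, $F_W^{-1}(1)=+\infty$. Let $\mu_1,\mu_2\in\mathbb{R}$, $\sigma_1,\sigma_2>0$, not both $\mu_1=\mu_2$ and $\sigma_1=\sigma_2$, and define $h:(0,1)\to\mathbb{R}$ by $$h(u)=e^{\mu_1+\sigma_1F_W^{-1}(u)}-e^{\mu_2+\sigma_2F_W^{-1}(u)},$$ with $y^{\min}=\inf_{u\in(0,1)}h(u)$ and $y^{\max}=\sup_{u\in(0,1)}h(u)$. For $\sigma_1\ne\sigma_2$ let $$c^{\star}=F_W\!\left(\frac{\mu_2-\mu_1}{\sigma_1-\sigma_2}\right),\qquad u^{\star}=F_W\!\left(\frac{\log(\sigma_1/\sigma_2)+\mu_1-\mu_2}{\sigma_2-\sigma_1}\right),\qquad y^{\star}=h(u^{\star}).$$ Then: 1. If $\sigma_1=\sigma_2$ and $\mu_1>\mu_2$: $y^{\min}=0$, $y^{\max}=+\infty$, and $h$ is non-decreasing. 2. If $\sigma_1=\sigma_2$ and $\mu_2>\mu_1$: $y^{\min}=-\infty$, $y^{\max}=0$, and $h$ is non-increasing. 3. If $\sigma_1>\sigma_2$: $y^{\min}=y^{\star}<0$, $y^{\max}=+\infty$, and $h$ has a non-decreasing upper tail with threshold $c^{\star}$. 4. If $\sigma_1<\sigma_2$: $y^{\min}=-\infty$, $y^{\max}=y^{\star}>0$,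 and $h$ has a non-increasing upper tail with threshold $c^{\star}$.
   Context: For $f:(0,1)\to\mathbb{R}$: $f$ has a non-decreasing upper tail if there exists $x'\in(0,1)$ with $f(x)\le f(x')$ for all $x<x'$ and $f(x_1)\le f(x_2)$ for all $x'\le x_1\le x_2$; its threshold is the infimum of the set of all such $x'$. $f$ has a non-increasing upper tail if there exists $x'\in(0,1)$ with $f(x)\ge f(x')$ for all $x<x'$ and $f(x_1)\ge f(x_2)$ for all $x'\le x_1\le x_2$; its threshold is the infimum of the set of all such $x'$. (In the paper's setting, $h(U)$ with $U$ uniform on $[0,1]$ is the distribution of $R_1-R_2$ for comonotonic $R_i$ with $\log R_i=\mu_i+\sigma_iW$.) *)

From HB Require Import structures.
From mathcomp Require Import all_boot all_order all_algebra.
From mathcomp Require Import all_classical all_reals all_analysis.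
Set Implicit Arguments. Unset Strict Implicit. Unset Printing Implicit Defensive.
Import Order.TTheory GRing.Theory Num.Theory.
Local Open Scope classical_set_scope.
Local Open Scope ring_scope.

Section defs.
Variable R : realType.

Definition inv_cdf (F : R -> R) (u : R) : R := inf [set x : R | u <= F x].

Definition hfun (Finv : R -> R) (mu1 s1 mu2 s2 : R) (u : R) : R :=
  expR (mu1 + s1 * Finv u) - expR (mu2 + s2 * Finv u).

Definition ymin (h : R -> R) : \bar R :=
  ereal_inf [set (h u)%:E | u in `]0, 1[%classic].
Definition ymax (h : R -> R) : \bar R :=
  ereal_sup [set (h u)%:E | u in `]0, 1[%classic].

Definition nondec_tail_at (f : R -> R) (x' : R) : Prop :=
  0 < x' < 1 /\
  (forall x, 0 < x -> x < x' -> f x <= f x') /\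
  (forall x1 x2, x' <= x1 -> x1 <= x2 -> x2 < 1 -> f x1 <= f x2).

Definition noninc_tail_at (f : R -> R) (x' : R) : Prop :=
  0 < x' < 1 /\
  (forall x, 0 < x -> x < x' -> f x' <= f x) /\
  (forall x1 x2, x' <= x1 -> x1 <= x2 -> x2 < 1 -> f x2 <= f x1).

Definition has_nondec_upper_tail (f : R -> R) := exists x', nondec_tail_at f x'.
Definition has_noninc_upper_tail (f : R -> R) := exists x', noninc_tail_at f x'.

Definition nondec_tail_threshold (f : R -> R) : R := inf [set x' | nondec_tail_at f x'].
Definition noninc_tail_threshold (f : R -> R) : R := inf [set x' | noninc_tail_at f x'].

Definition nondecreasing_on01 (f : R -> R) :=
  forall u v, 0 < u -> u <= v -> v < 1 -> f u <= f v.
Definition nonincreasing_on01 (f : R -> R) :=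
  forall u v, 0 < u -> u <= v -> v < 1 -> f v <= f u.

End defs.

From HB Require Import structures.
From mathcomp Require Import all_boot all_order all_algebra.
From mathcomp Require Import all_classical all_reals all_analysis.
From mathcomp Require Import measurable_realfun.
From mathcomp Require Import ring lra.
Set Implicit Arguments. Unset Strict Implicit. Unset Printing Implicit Defensive.
Import Order.TTheory GRing.Theory Num.Theory.
Local Open Scope classical_set_scope.
Local Open Scope ring_scope.

(* Since F is a continuous, strictly increasing bijection from R onto (0,1), the
   quantile function is its inverse and h = g o F^-1 with
   g t = e^(mu1 + s1 t) - e^(mu2 + s2 t), so everything reduces to the shape of g.
   The derivative s1 e^(mu1 + s1 t) - s2 e^(mu2 + s2 t) has the sign of the affine
   function (ln s1 + mu1 + s1 t) - (ln s2 + mu2 + s2 t).  Hence for s1 > s2, g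
   decreases then increases, with minimum at t* = (ln (s1/s2) + mu1 - mu2)/(s2 - s1),
   is negative exactly left of its root t0 = (mu2 - mu1)/(s1 - s2), tends to 0 at
   -oo and to +oo at +oo.  Being negative yet tending to 0 on (-oo, t0), g has no
   non-decreasing tail starting left of t0, so the threshold is F t0.  For s1 = s2,
   g is monotone; the cases mu2 > mu1 and s1 < s2 follow by swapping the two
   exponentials, which negates h. *)

Section expdiff.
Variable R : realType.
Implicit Types m a t x y e : R.

Definition expdiff m1 a1 m2 a2 t : R := expR (m1 + a1 * t) - expR (m2 + a2 * t).

Lemma expdiffC m1 a1 m2 a2 t : expdiff m2 a2 m1 a1 t = - expdiff m1 a1 m2 a2 t.
Proof. by rewrite /expdiff opprB. Qed.

Lemma expdiff_lt0 m1 a1 m2 a2 t :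
  (expdiff m1 a1 m2 a2 t < 0) = (m1 + a1 * t < m2 + a2 * t).
Proof. by rewrite subr_lt0 ltr_expR. Qed.

Lemma expdiff_gt0 m1 a1 m2 a2 t :
  (0 < expdiff m1 a1 m2 a2 t) = (m2 + a2 * t < m1 + a1 * t).
Proof. by rewrite subr_gt0 ltr_expR. Qed.

Lemma is_derive_expR_affine m a x :
  is_derive x 1 (fun t => expR (m + a * t)) (a * expR (m + a * x)).
Proof.
have affine : is_derive x 1 (cst m + a \*: (@id R)) (0 + a *: (1 : R)).
  by apply: is_deriveD; apply: is_deriveZ.
have affineE : cst m + a \*: (@id R) = (fun t => m + a * t) by apply/funext.
rewrite affineE add0r [_ *: _]mulr1 in affine.
by rewrite mulrC; exact: is_derive1_comp.
Qed.

(* On [x, y] the derivative [a1 e^(m1 + a1 c) - a2 e^(m2 + a2 c)] has the sign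
   of [(ln a1 + m1 + a1 c) - (ln a2 + m2 + a2 c)]. *)
Lemma expdiff_le m1 a1 m2 a2 x y : 0 < a1 -> 0 < a2 -> x <= y ->
  (forall c, x < c < y -> ln a2 + m2 + a2 * c <= ln a1 + m1 + a1 * c) ->
  expdiff m1 a1 m2 a2 x <= expdiff m1 a1 m2 a2 y.
Proof.
move=> a1_gt0 a2_gt0; rewrite le_eqVlt => /predU1P[-> //|xy] slope.
pose dg c := a1 * expR (m1 + a1 * c) - a2 * expR (m2 + a2 * c).
have derive (c : R) : is_derive c 1 (expdiff m1 a1 m2 a2) (dg c).
  by apply: is_deriveB; exact: is_derive_expR_affine.
rewrite -subr_ge0; have [c cxy ->] : exists2 c, c \in `]x, y[ &
    expdiff m1 a1 m2 a2 y - expdiff m1 a1 m2 a2 x = dg c * (y - x).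
  apply: MVT => //; apply: derivable_within_continuous => z _.
  exact: (@ex_derive _ _ _ _ _ _ _ (derive z)).
rewrite mulr_ge0 ?subr_ge0 ?(ltW xy)// /dg.
have mul_expR a m : 0 < a -> a * expR m = expR (ln a + m).
  by move=> a_gt0; rewrite expRD lnK.
rewrite !mul_expR// ler_expR !addrA; apply: slope.
by move: cxy; rewrite in_itv.
Qed.

Lemma expR_affine_lt m a e B : 0 < a -> 0 < e ->
  exists2 t, t < B & expR (m + a * t) < e.
Proof.
move=> a_gt0 e_gt0; exists (Num.min (B - 1) ((ln e - m) / a - 1)).
  by rewrite gt_min ltrBlDr ltrDl ltr01.
rewrite -[e in _ < e]lnK ?posrE// ltr_expR.
have : Num.min (B - 1) ((ln e - m) / a - 1) <= (ln e - m) / a - 1 by rewrite ge_min lexx orbT.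
have : a * ((ln e - m) / a) = ln e - m by rewrite mulrC divfK ?gt_eqF.
nra.
Qed.

(* For [t >= t1] the exponent gap [(m1 + a1 t) - (m2 + a2 t)] stays at least its
   positive value at [t1], so [expdiff] grows like [e^(m2 + a2 t)]. *)
Lemma expdiff_unbounded m1 a1 m2 a2 t1 M : 0 < a2 -> a2 <= a1 ->
  m2 + a2 * t1 < m1 + a1 * t1 -> exists t, M < expdiff m1 a1 m2 a2 t.
Proof.
move=> a2_gt0 a21 dom.
pose c := expR (m1 + a1 * t1 - (m2 + a2 * t1)) - 1.
have c_gt0 : 0 < c by rewrite subr_gt0 expR_gt1 subr_gt0.
pose t := Num.max t1 ((M / c - m2) / a2).
have t1t : t1 <= t by rewrite le_max lexx.
have Mt : (M / c - m2) / a2 <= t by rewrite le_max lexx orbT.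
exists t; rewrite /expdiff.
have -> : m1 + a1 * t = (m2 + a2 * t) + (m1 + a1 * t - (m2 + a2 * t)) by ring.
have grow : c <= expR (m1 + a1 * t - (m2 + a2 * t)) - 1.
  by rewrite lerD2r ler_expR; nra.
have big : M / c < expR (m2 + a2 * t).
  apply: lt_le_trans (expR_ge1Dx _).
  have : a2 * ((M / c - m2) / a2) = M / c - m2 by rewrite mulrC divfK ?gt_eqF.
  nra.
have M_eq : M = M / c * c by rewrite divfK ?gt_eqF.
rewrite expRD; move: grow big (expR_gt0 (m2 + a2 * t)).
set A := expR (m2 + a2 * t); set D := expR _; nra.
Qed.

End expdiff.

Section expdiff_steeper_first.
Variable R : realType.

Definition expdiff_root (m1 a1 m2 a2 : R) := (m2 - m1) / (a1 - a2).
Definition expdiff_argmin (m1 a1 m2 a2 : R) := (ln (a1 / a2) + m1 - m2) / (a2 - a1).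

Lemma expdiff_rootC m1 a1 m2 a2 : expdiff_root m2 a2 m1 a1 = expdiff_root m1 a1 m2 a2.
Proof. by rewrite /expdiff_root -[LHS]mulrNN -invrN !opprB. Qed.

Lemma expdiff_argminC m1 a1 m2 a2 : 0 < a1 -> 0 < a2 ->
  expdiff_argmin m2 a2 m1 a1 = expdiff_argmin m1 a1 m2 a2.
Proof.
move=> a1_gt0 a2_gt0; rewrite /expdiff_argmin -[a2 / a1]invf_div lnV ?posrE ?divr_gt0//.
by rewrite -(opprB a2) invrN mulrN -mulNr; congr (_ * _); ring.
Qed.

Variables m1 a1 m2 a2 : R.
Hypotheses (a2_gt0 : 0 < a2) (a21 : a2 < a1).
Local Notation g := (expdiff m1 a1 m2 a2).
Local Notation t0 := (expdiff_root m1 a1 m2 a2).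
Local Notation ts := (expdiff_argmin m1 a1 m2 a2).

Let a1_gt0 : 0 < a1. Proof. exact: lt_trans a21. Qed.

Let root_eq : m1 + a1 * t0 = m2 + a2 * t0.
Proof.
have : (a1 - a2) * t0 = m2 - m1 by rewrite mulrC divfK// subr_eq0 gt_eqF.
lra.
Qed.

Let argmin_eq : ln a1 + m1 + a1 * ts = ln a2 + m2 + a2 * ts.
Proof.
have : (a2 - a1) * ts = ln (a1 / a2) + m1 - m2 by rewrite mulrC divfK// subr_eq0 lt_eqF.
rewrite lnM ?lnV ?posrE ?invr_gt0//; lra.
Qed.

Lemma expdiff_argmin_lt_root : ts < t0.
Proof.
have ln_lt : ln a2 < ln a1 by rewrite ltr_ln ?posrE.
rewrite ltNge; apply/negP => t0_le_ts.
have : 0 <= (a1 - a2) * (ts - t0) by apply: mulr_ge0; rewrite subr_ge0 // ltW.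
by move: root_eq argmin_eq; nra.
Qed.

Lemma expdiff_root0 : g t0 = 0.
Proof. by rewrite /expdiff root_eq subrr. Qed.

Lemma expdiff_lt0_root t : t < t0 -> g t < 0.
Proof.
move=> tt0; rewrite expdiff_lt0.
have : 0 < (a1 - a2) * (t0 - t) by apply: mulr_gt0; rewrite subr_gt0.
by move: root_eq; nra.
Qed.

Lemma expdiff_le_argmin x y : ts <= x -> x <= y -> g x <= g y.
Proof.
move=> tx xy; apply: expdiff_le => // c /andP[xc _].
have : 0 <= (a1 - a2) * (c - ts)
  by apply: mulr_ge0; rewrite subr_ge0; [exact: ltW | exact: le_trans tx (ltW xc)].
by move: argmin_eq; nra.
Qed.

Lemma expdiff_ge_argmin x y : x <= y -> y <= ts -> g y <= g x.
Proof.
move=> xy yt; rewrite -lerN2 -!expdiffC; apply: expdiff_le => // c /andP[_ cy].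
have : 0 <= (a1 - a2) * (ts - c)
  by apply: mulr_ge0; rewrite subr_ge0; [exact: ltW | exact: le_trans (ltW cy) yt].
by move: argmin_eq; nra.
Qed.

Lemma expdiff_argmin_min t : g ts <= g t.
Proof.
have [ts_le_t|/ltW t_le_ts] := leP ts t.
  exact: expdiff_le_argmin.
exact: expdiff_ge_argmin.
Qed.

Lemma expdiff_argmin_lt0 : g ts < 0.
Proof. exact/expdiff_lt0_root/expdiff_argmin_lt_root. Qed.

(* Left of the root, [g] is negative while [g t' > - e^(m2 + a2 t')] tends to 0
   as [t'] goes to [-oo]. *)
Lemma expdiff_left_gt t : t < t0 -> exists2 t', t' < t & g t < g t'.
Proof.
move=> /expdiff_lt0_root; rewrite -oppr_gt0 => gt_lt0.
have [t' t't small] := expR_affine_lt m2 t a2_gt0 gt_lt0.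
exists t' => //; move: small; rewrite /expdiff; have := expR_gt0 (m1 + a1 * t').
lra.
Qed.

Lemma expdiff_steeper_unbounded M : exists t, M < g t.
Proof.
apply: (expdiff_unbounded (t1 := t0 + 1)) => //; first exact: ltW.
by rewrite !mulrDr !mulr1 !addrA root_eq ltrD2l.
Qed.

End expdiff_steeper_first.

Section extrema.
Variable R : realType.

Lemma inf_eq_lbound (S : set R) x : S x -> lbound S x -> inf S = x.
Proof.
move=> Sx lbx; apply/le_anti/andP; split; first exact: ge_inf (ex_intro _ x lbx) _ Sx.
exact: lb_le_inf (ex_intro _ x Sx) lbx.
Qed.

Lemma ereal_sup_range_pinfty (T : Type) (g : T -> R) :
  (forall M, exists t, M < g t) -> ereal_sup (range (fun t => (g t)%:E)) = +oo%E.
Proof.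
move=> unbounded; have gt_sup M : (M%:E < ereal_sup (range (fun t => (g t)%:E)))%E.
  have [t Mt] := unbounded M.
  apply: (@lt_le_trans _ _ (g t)%:E); first by rewrite lte_fin.
  by apply: ereal_sup_ubound; exists t.
case E : ereal_sup => [r| |] //; first by have := gt_sup r; rewrite E ltxx.
by have := gt_sup 0; rewrite E.
Qed.

Lemma yminN (G : R -> R) : ymin (fun u => - G u) = (- ymax G)%E.
Proof.
rewrite /ymin /ymax /ereal_inf image_comp; congr (- ereal_sup _)%E.
by apply: eq_imagel => u _ /=; rewrite opprK.
Qed.

Lemma ymaxN (G : R -> R) : ymax (fun u => - G u) = (- ymin G)%E.
Proof. by rewrite /ymin /ymax /ereal_inf image_comp oppeK. Qed.

Lemma nonincreasing_on01N (G : R -> R) :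
  nonincreasing_on01 (fun u => - G u) <-> nondecreasing_on01 G.
Proof.
by split=> mono u v u_gt0 uv v_lt1; [rewrite -lerN2|rewrite lerN2]; apply: mono.
Qed.

Lemma noninc_tail_atN (G : R -> R) x :
  noninc_tail_at (fun u => - G u) x <-> nondec_tail_at G x.
Proof.
split=> -[x01 [below mono]]; (split; first exact: x01); split.
- by move=> y y_gt0 yx; rewrite -lerN2; apply: below.
- by move=> x1 x2 xx1 x12 x2_lt1; rewrite -lerN2; apply: mono.
- by move=> y y_gt0 yx; rewrite lerN2; apply: below.
- by move=> x1 x2 xx1 x12 x2_lt1; rewrite lerN2; apply: mono.
Qed.

Lemma noninc_tail_thresholdN (G : R -> R) :
  noninc_tail_threshold (fun u => - G u) = nondec_tail_threshold G.
Proof. by congr inf; apply/seteqP; split=> x /noninc_tail_atN. Qed.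

Lemma hfunC (Finv : R -> R) m1 a1 m2 a2 :
  hfun Finv m1 a1 m2 a2 = (fun u => - hfun Finv m2 a2 m1 a1 u).
Proof. by apply/funext => u; rewrite /hfun opprB. Qed.

End extrema.

Section quantile.
Variables (R : realType) (F : R -> R).
Hypothesis F_incr : {homo F : x y / x < y}.
Local Notation Finv := (inv_cdf F).

Let F_le : {mono F : x y / x <= y}. Proof. exact: le_mono. Qed.
Let F_lt : {mono F : x y / x < y}. Proof. exact: leW_mono. Qed.

Lemma inv_cdfK : cancel F Finv.
Proof. by move=> t; apply: inf_eq_lbound => [|x] /=; rewrite ?F_le. Qed.

Hypothesis F_range : range F = `]0, 1[%classic.

Let F_onto u : 0 < u -> u < 1 -> exists t, F t = u.
Proof.
move=> u_gt0 u_lt1; have : `]0, 1[%classic u by rewrite /= in_itv /= u_gt0.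
by rewrite -F_range => -[t _ Ftu]; exists t.
Qed.

Let F_gt0_lt1 t : 0 < F t < 1.
Proof. by have : `]0, 1[%classic (F t) by rewrite -F_range; exists t. Qed.

Let F_gt0 t : 0 < F t. Proof. by case/andP: (F_gt0_lt1 t). Qed.
Let F_lt1 t : F t < 1. Proof. by case/andP: (F_gt0_lt1 t). Qed.

Lemma ymin_inv_cdf (g : R -> R) :
  ymin (fun u => g (Finv u)) = ereal_inf (range (fun t => (g t)%:E)).
Proof.
rewrite /ymin -F_range; congr ereal_inf; rewrite image_comp.
by apply: eq_imagel => t _ /=; rewrite inv_cdfK.
Qed.

Lemma ymax_inv_cdf (g : R -> R) :
  ymax (fun u => g (Finv u)) = ereal_sup (range (fun t => (g t)%:E)).
Proof.
rewrite /ymax -F_range; congr ereal_sup; rewrite image_comp.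
by apply: eq_imagel => t _ /=; rewrite inv_cdfK.
Qed.

Lemma nondecreasing_on01_inv_cdf (g : R -> R) :
  {homo g : x y / x <= y} -> nondecreasing_on01 (fun u => g (Finv u)).
Proof.
move=> g_le u v u_gt0 uv v_lt1.
have [x Fxu] := F_onto u_gt0 (le_lt_trans uv v_lt1).
have [y Fyv] := F_onto (lt_le_trans u_gt0 uv) v_lt1.
by subst u v; rewrite !inv_cdfK; apply: g_le; rewrite -F_le.
Qed.

Section tail.
Variables (g : R -> R) (t0 : R).
Hypotheses (g_left : forall x, x < t0 -> g x <= g t0)
           (g_right : forall x y, t0 <= x -> x <= y -> g x <= g y).

Lemma nondec_tail_at_inv_cdf : nondec_tail_at (fun u => g (Finv u)) (F t0).
Proof.
split; [exact: F_gt0_lt1|split].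
- move=> u u_gt0 ut0; have [x Fxu] := F_onto u_gt0 (lt_trans ut0 (F_lt1 t0)).
  by subst u; rewrite !inv_cdfK; apply/g_left; rewrite -F_lt.
- move=> u v t0u uv v_lt1; have u_gt0 := lt_le_trans (F_gt0 t0) t0u.
  have [x Fxu] := F_onto u_gt0 (le_lt_trans uv v_lt1).
  have [y Fyv] := F_onto (lt_le_trans u_gt0 uv) v_lt1.
  by subst u v; rewrite !inv_cdfK; apply: g_right; rewrite -F_le.
Qed.

(* A tail starting at [F x] forces [g t <= g x] for every [t < x]. *)
Lemma nondec_tail_threshold_inv_cdf :
  (forall x, x < t0 -> exists2 t, t < x & g x < g t) ->
  nondec_tail_threshold (fun u => g (Finv u)) = F t0.
Proof.
move=> g_left_gt; apply: inf_eq_lbound => /=; first exact: nondec_tail_at_inv_cdf.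
move=> u [/andP[u_gt0 u_lt1] [tail_left _]]; have [x Fxu] := F_onto u_gt0 u_lt1.
subst u; rewrite F_le leNgt; apply/negP => /g_left_gt[t tx gxt].
have := tail_left (F t) (F_gt0 t) (F_incr tx).
by rewrite !inv_cdfK leNgt gxt.
Qed.

End tail.

Lemma hfunE m1 a1 m2 a2 :
  hfun Finv m1 a1 m2 a2 = (fun u => expdiff m1 a1 m2 a2 (Finv u)).
Proof. by []. Qed.

Lemma hfun_eq_slopes_nondecreasing m1 m2 s : 0 < s -> m2 < m1 ->
  ymin (hfun Finv m1 s m2 s) = 0%E /\ ymax (hfun Finv m1 s m2 s) = +oo%E /\
  nondecreasing_on01 (hfun Finv m1 s m2 s).
Proof.
move=> s_gt0 m21; rewrite hfunE.
have g_gt0 t : 0 < expdiff m1 s m2 s t by rewrite expdiff_gt0 ltrD2r.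
split; [|split].
- rewrite ymin_inv_cdf; apply/le_anti/andP; split; last first.
    by apply/ereal_infP => _ [t _ <-]; rewrite lee_fin ltW.
  apply/lee_addgt0Pr => e e_gt0; rewrite add0e.
  have [t _ small] := expR_affine_lt m1 0 s_gt0 e_gt0.
  apply: le_trans (ereal_inf_lbound _) _; first by exists t.
  rewrite lee_fin ltW // (lt_trans _ small) // /expdiff ltrBlDr ltrDl.
  exact: expR_gt0.
- rewrite ymax_inv_cdf; apply: ereal_sup_range_pinfty => M.
  by apply: (expdiff_unbounded (t1 := 0)); rewrite ?mulr0 ?addr0.
- apply: nondecreasing_on01_inv_cdf => x y xy; apply: expdiff_le => // c _.
  by rewrite lerD2r lerD2l ltW.
Qed.

Lemma hfun_eq_slopes_nonincreasing m1 m2 s : 0 < s -> m1 < m2 ->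
  ymin (hfun Finv m1 s m2 s) = -oo%E /\ ymax (hfun Finv m1 s m2 s) = 0%E /\
  nonincreasing_on01 (hfun Finv m1 s m2 s).
Proof.
move=> s_gt0 m12; rewrite hfunC yminN ymaxN.
have [-> [-> mono]] := hfun_eq_slopes_nondecreasing s_gt0 m12.
by rewrite oppe0; split => //; split => //; exact/nonincreasing_on01N.
Qed.

Section steeper_first.
Variables m1 a1 m2 a2 : R.
Hypotheses (a2_gt0 : 0 < a2) (a21 : a2 < a1).
Local Notation g := (expdiff m1 a1 m2 a2).
Local Notation h := (hfun Finv m1 a1 m2 a2).
Local Notation t0 := (expdiff_root m1 a1 m2 a2).
Local Notation ts := (expdiff_argmin m1 a1 m2 a2).

Lemma hfun_steeper_first :
  ymin h = (h (F ts))%:E /\ h (F ts) < 0 /\ ymax h = +oo%E /\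
  has_nondec_upper_tail h /\ nondec_tail_threshold h = F t0.
Proof.
have g_left x : x < t0 -> g x <= g t0.
  by move=> xt0; rewrite expdiff_root0 // ltW // expdiff_lt0_root.
have g_right x y : t0 <= x -> x <= y -> g x <= g y.
  move=> t0x; apply: expdiff_le_argmin => //.
  exact: le_trans (ltW (expdiff_argmin_lt_root _ _ _ _)) t0x.
rewrite hfunE inv_cdfK; split; [|split; [|split; [|split]]].
- rewrite ymin_inv_cdf; apply/le_anti/andP; split; first by apply: ereal_inf_lbound; exists ts.
  by apply/ereal_infP => _ [t _ <-]; rewrite lee_fin expdiff_argmin_min.
- exact: expdiff_argmin_lt0.
- by rewrite ymax_inv_cdf; apply: ereal_sup_range_pinfty; exact: expdiff_steeper_unbounded.
- by exists (F t0); exact: nondec_tail_at_inv_cdf.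
- by apply: nondec_tail_threshold_inv_cdf => // x; exact: expdiff_left_gt.
Qed.

End steeper_first.

Lemma hfun_steeper_second m1 a1 m2 a2 : 0 < a1 -> a1 < a2 ->
  let h := hfun Finv m1 a1 m2 a2 in
  ymin h = -oo%E /\ ymax h = (h (F (expdiff_argmin m1 a1 m2 a2)))%:E /\
  0 < h (F (expdiff_argmin m1 a1 m2 a2)) /\ has_noninc_upper_tail h /\
  noninc_tail_threshold h = F (expdiff_root m1 a1 m2 a2).
Proof.
move=> a1_gt0 a12 h; have a2_gt0 := lt_trans a1_gt0 a12.
have [ymin_ [neg [ymax_ [[x tail] thr]]]] := hfun_steeper_first m2 m1 a1_gt0 a12.
rewrite expdiff_argminC // expdiff_rootC in ymin_ neg thr.
rewrite /h (hfunC _ m1 a1 m2 a2) /= yminN ymaxN noninc_tail_thresholdN.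
rewrite ymin_ ymax_ thr EFinN oppr_gt0.
by do !split => //; exists x; apply/noninc_tail_atN.
Qed.

End quantile.

Section density_cdf.
Variables (R : realType) (d : measure_display) (T : measurableType d).
Variables (P : probability T R) (W : {RV P >-> R}) (f : R -> R).
Hypotheses (mf : measurable_fun setT f) (f_gt0 : forall x, 0 < f x).
Hypothesis cdf_density : forall x,
  cdf W x = (\int[lebesgue_measure]_(y in `]-oo, x]) (f y)%:E)%E.

Let F := fun x => fine (cdf W x).

Let mfE (A : set R) : measurable_fun A (EFin \o f).
Proof. exact/measurable_EFinP/measurable_funTS. Qed.

Let f_ge0 (A : set R) x : A x -> (0 <= (f x)%:E)%E.
Proof. by rewrite lee_fin ltW. Qed.

Lemma cdfE x : cdf W x = (F x)%:E.
Proof.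
rewrite /F fineK // ge0_fin_numE ?cdf_ge0 //.
exact: le_lt_trans (cdf_le1 W x) (ltry 1).
Qed.

Lemma integral_density_itv_gt0 x y : x < y ->
  (0 < \int[lebesgue_measure]_(z in `]x, y]) (f z)%:E)%E.
Proof.
move=> xy; rewrite lt_neqAle integral_ge0 ?andbT; last exact: f_ge0.
apply/negP => /eqP/esym int0.
have int_abs0 : (\int[lebesgue_measure]_(z in `]x, y]) `|(f z)%:E| = 0)%E.
  rewrite -int0; apply: eq_integral => z _; exact/gee0_abs/f_ge0.
have mxy : measurable (`]x, y]%classic : set R) by exact: measurable_itv.
have [N [mN N0 sub]] := (ae_eq_integral_abs lebesgue_measure mxy (@mfE _)).1 int_abs0.
have : (lebesgue_measure (`]x, y] : set R) <= lebesgue_measure N)%E.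
  apply: le_measure; rewrite ?inE //.
  by move=> z zxy; apply: sub => /(_ zxy) /eqP; rewrite eqe gt_eqF.
by rewrite N0 lebesgue_measure_itv /= lte_fin xy -EFinD lee_fin leNgt subr_gt0 xy.
Qed.

Lemma cdf_density_incr : {homo F : x y / x < y}.
Proof.
move=> x y xy; rewrite -lte_fin -!cdfE (cdf_density y).
rewrite (@itv_bndbnd_setU _ _ _ (BRight x)) ?bnd_simp ?ltW //.
rewrite ge0_integral_setU //=; [|exact: mfE|exact: f_ge0|].
  by rewrite -cdf_density cdfE lteDl //; exact: integral_density_itv_gt0.
apply/disj_set2P; rewrite -subset0 => z [] /=; rewrite !in_itv /= => zx /andP[xz _].
by move: (lt_le_trans xz zx); rewrite ltxx.
Qed.

Lemma cdf_exists_gt u : u < 1 -> exists x, u < F x.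
Proof.
move=> u_lt1.
have sup1 : ereal_sup (range (cdf W)) = 1%E.
  exact: cvg_unique _ (nondecreasing_cvge (cdf_nondecreasing W)) (cvg_cdfy1 W).
have : (u%:E < ereal_sup (range (cdf W)))%E by rewrite sup1 lte_fin.
by case/ereal_sup_gt => _ [x _ <-]; rewrite cdfE lte_fin; exists x.
Qed.

Lemma cdf_exists_lt u : 0 < u -> exists x, F x < u.
Proof.
move=> u_gt0.
have noninc : nonincreasing_fun (cdf W \o -%R).
  by move=> x y; rewrite -lerN2; exact: cdf_nondecreasing.
have cvg0 : (cdf W \o -%R) x @[x --> +oo] --> 0%E.
  by rewrite -cvgNy_compNP; exact: cvg_cdfNy0.
have inf0 : ereal_inf (range (cdf W \o -%R)) = 0%E.
  exact: cvg_unique _ (nonincreasing_cvge noninc) cvg0.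
have : (ereal_inf (range (cdf W \o -%R)) < u%:E)%E by rewrite inf0 lte_fin.
by case/ereal_inf_lt => _ [x _ <-]; rewrite /= cdfE lte_fin; exists (- x).
Qed.

Lemma cdf_right_lt t u : F t < u -> exists2 e, 0 < e & F (t + e) < u.
Proof.
move=> Ftu.
have : cdf W x @[x --> t^'+] --> (F t)%:E by rewrite -cdfE; exact: cdf_right_continuous.
move=> /fine_cvgP[_ /cvgr_lt /(_ u Ftu) F_lt].
near (t^'+) => x.
exists (x - t); first by rewrite subr_gt0; near: x; exact: nbhs_right_gt.
by rewrite addrC subrK; near: x; exact: F_lt.
Unshelve. all: by end_near. Qed.

(* Left continuity of [F], by monotone convergence of the integrals of [f] over
   [`]-oo, t - 1/(n+1)]], whose union is [`]-oo, t[]. *)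
Lemma cdf_left_gt t u : u < F t -> exists2 e, 0 < e & u < F (t - e).
Proof.
move=> uFt; pose A n : set R := `]-oo, t - n.+1%:R^-1]%classic.
have ndA : nondecreasing_seq A.
  move=> n m nm; apply/subsetPset; apply: subset_itvl.
  by rewrite bnd_simp lerD2l lerN2 lef_pV2 ?posrE // ler_nat.
have UA : \bigcup_n A n = `]-oo, t[%classic.
  apply/seteqP; split => z /=.
    move=> [n _]; rewrite /A /= !in_itv /= => zt.
    by rewrite (le_lt_trans zt) // ltrBlDr ltrDl.
  rewrite in_itv /= => zt; have [k zkt] := ltr_add_invr zt.
  by exists k => //; rewrite /A /= in_itv /= lerBrDr ltW.
have cdfA n : (\int[lebesgue_measure]_(x in A n) (f x)%:E)%E = cdf W (t - n.+1%:R^-1).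
  by rewrite cdf_density.
have cvg_cdf : cdf W (t - n.+1%:R^-1) @[n --> \oo] --> cdf W t.
  rewrite cdf_density -integral_itv_bndo_bndc -?UA; last exact: mfE.
  under eq_fun do rewrite -cdfA.
  apply: ge0_nondecreasing_set_cvg_integral => // [n|n|n x _].
  - exact: measurable_itv.
  - exact: mfE.
  - exact: f_ge0.
have nd_cdf : nondecreasing_seq (fun n => cdf W (t - n.+1%:R^-1)).
  move=> n m; rewrite -!cdfA; move: n m.
  apply: ge0_nondecreasing_set_nondecreasing_integral => // [n|n|n x _].
  - exact: measurable_itv.
  - exact: mfE.
  - exact: f_ge0.
have : (u%:E < ereal_sup (range (fun n => cdf W (t - n.+1%:R^-1))))%E.
  by rewrite -(cvg_unique _ cvg_cdf (ereal_nondecreasing_cvgn nd_cdf)) // cdfE lte_fin.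
by case/ereal_sup_gt => _ [n _ <-]; rewrite cdfE lte_fin; exists n.+1%:R^-1.
Qed.

Lemma cdf_density_range : range F = `]0, 1[%classic.
Proof.
apply/seteqP; split => [_ [x _ <-]|u].
  have F_ge0 : 0 <= F (x - 1) by rewrite fine_ge0 ?cdf_ge0.
  have F_le1 : F (x + 1) <= 1 by rewrite -lee_fin -cdfE cdf_le1.
  have : F (x - 1) < F x by apply: cdf_density_incr; rewrite ltrBlDr ltrDl.
  have : F x < F (x + 1) by apply: cdf_density_incr; rewrite ltrDl.
  by rewrite /= in_itv /=; lra.
rewrite /= in_itv /= => /andP[u_gt0 u_lt1]; set S := [set x | u <= F x].
(* Left continuity gives [F (inf S) <= u], right continuity [u <= F (inf S)]. *)
have [y Fy_lt] := cdf_exists_lt u_gt0; have [z Fz_gt] := cdf_exists_gt u_lt1.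
have lbS : lbound S y.
  move=> x /= uFx; rewrite leNgt; apply/negP => /cdf_density_incr Fxy.
  by have := lt_trans Fxy (lt_le_trans Fy_lt uFx); rewrite ltxx.
have Sz : S z by rewrite /S /= ltW.
exists (inf S) => //; apply/le_anti/andP; split.
  rewrite leNgt; apply/negP => /cdf_left_gt[e e_gt0 uFe].
  have S_e : S (inf S - e) by rewrite /S /= ltW.
  by have := ge_inf (ex_intro _ y lbS) S_e; lra.
rewrite leNgt; apply/negP => /cdf_right_lt[e e_gt0 Fe_lt].
have inf_lt_e : inf S < inf S + e by rewrite ltrDl.
have [x Sx xe] := inf_lt (ex_intro _ z Sz) inf_lt_e.
by have := cdf_density_incr xe; rewrite /S /= in Sx; lra.
Qed.

End density_cdf.

Theorem proposition6p1 (R : realType) (d : measure_display) (T : measurableType d)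
  (P : probability T R) (W : {RV P >-> R}) (f : R -> R)
  (mu1 mu2 s1 s2 : R) :
  ('E_P[W] = 0)%E ->
  ('V_P[W] = 1)%E ->
  measurable_fun setT f ->
  (forall x, 0 < f x) ->
  (forall x, cdf W x = (\int[lebesgue_measure]_(y in `]-oo, x]) (f y)%:E)%E) ->
  0 < s1 -> 0 < s2 ->
  ~ (mu1 = mu2 /\ s1 = s2) ->
  let F := fun x => fine (cdf W x) in
  let Finv := inv_cdf F in
  let h := hfun Finv mu1 s1 mu2 s2 in
  let cstar := F ((mu2 - mu1) / (s1 - s2)) in
  let ustar := F ((ln (s1 / s2) + mu1 - mu2) / (s2 - s1)) in
  let ystar := h ustar in
  (s1 = s2 -> mu1 > mu2 ->
     ymin h = 0%E /\ ymax h = +oo%E /\ nondecreasing_on01 h) /\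
  (s1 = s2 -> mu2 > mu1 ->
     ymin h = -oo%E /\ ymax h = 0%E /\ nonincreasing_on01 h) /\
  (s1 > s2 ->
     ymin h = ystar%:E /\ ystar < 0 /\ ymax h = +oo%E /\
     has_nondec_upper_tail h /\ nondec_tail_threshold h = cstar) /\
  (s1 < s2 ->
     ymin h = -oo%E /\ ymax h = ystar%:E /\ ystar > 0 /\
     has_noninc_upper_tail h /\ noninc_tail_threshold h = cstar).
Proof.
move=> _ _ mf f_gt0 cdf_density s1_gt0 s2_gt0 _ F Finv h cstar ustar ystar.
have F_incr := cdf_density_incr mf f_gt0 cdf_density.
have F_range := cdf_density_range mf f_gt0 cdf_density.
split; [|split; [|split]].
- by move=> s12; subst s2; exact: hfun_eq_slopes_nondecreasing.
- by move=> s12; subst s2; exact: hfun_eq_slopes_nonincreasing.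
- exact: hfun_steeper_first.
- exact: hfun_steeper_second.
Qed.
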